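(* Let $n$ be a positive integer for which Williamson type matrices of order $n$ exist. Then there exist four mutually quasi-unbiased Hadamard matrices for the parameters $(16n,16n,16,16n^2)$.
   Context: Williamson type matrices of order $n$ are four $n\times n$ $(1,-1)$-matrices $A,B,C,D$ such that $XY^\top=YX^\top$ for all $X,Y\in\{A,B,C,D\}$ and $AA^\top+BB^\top+CC^\top+DD^\top=4nI_n$. A Hadamard matrix of order $N$ is an $N\times N$ $(1,-1)$-matrix $H$ with $HH^\top=NI_N$; a weighing matrix of order $N$ and weight $k$ is an $N\times N$ $(0,1,-1)$-matrix $W$ with $WW^\top=kI_N$. Two weighing matrices (e.g. Hadamard matrices) $W_1,W_2$ of order $N$ and weight $k$ are quasi-unbiased for parameters $(N,k,l,a)$ if $\frac1{\sqrt a}W_1W_2^\top$ is a weighing matrix of order $N$ and weight $l$; mutually quasi-unbiased means pairwise. *)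

From HB Require Import structures.
From mathcomp Require Import all_boot all_order all_algebra.
Set Implicit Arguments. Unset Strict Implicit. Unset Printing Implicit Defensive.
Import Order.TTheory GRing.Theory Num.Theory.
Local Open Scope ring_scope.

Section Defs.
Variable R : rcfType.

Definition pm1_mx (m n : nat) (A : 'M[R]_(m, n)) : Prop :=
  forall i j, A i j = 1 \/ A i j = -1.

Definition z1m1_mx (m n : nat) (A : 'M[R]_(m, n)) : Prop :=
  forall i j, A i j = 0 \/ A i j = 1 \/ A i j = -1.

Definition williamson_type (n : nat) (A B C D : 'M[R]_n) : Prop :=
  [/\ [/\ pm1_mx A, pm1_mx B, pm1_mx C & pm1_mx D],
      (forall X Y, X \in [:: A; B; C; D] -> Y \in [:: A; B; C; D] ->
         X *m Y^T = Y *m X^T)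
    & A *m A^T + B *m B^T + C *m C^T + D *m D^T = (4 * n)%:R%:M].

Definition hadamard (N : nat) (H : 'M[R]_N) : Prop :=
  pm1_mx H /\ H *m H^T = N%:R%:M.

Definition weighing (N k : nat) (W : 'M[R]_N) : Prop :=
  z1m1_mx W /\ W *m W^T = k%:R%:M.

Definition quasi_unbiased (N k l a : nat) (W1 W2 : 'M[R]_N) : Prop :=
  [/\ weighing k W1, weighing k W2 &
      weighing l ((Num.sqrt (a%:R : R))^-1 *: (W1 *m W2^T))].

End Defs.

From HB Require Import structures.
From mathcomp Require Import all_boot all_order all_algebra.
From mathcomp Require Import mxtens ring.

(* The Williamson array turns A, B, C, D into a Hadamard matrix W of order 4n
   whose rows and columns are indexed by pairs (t, p) with t in GF(4).  For i
   in GF(4) let H_i be the matrix with rows (s, t, p), column blocks b in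
   GF(4), and entries K(s, b) W((i b + t, p), _), where K is the Sylvester
   Hadamard matrix of order 4.  Since W W^T = 4n,
     (H_i H_j^T)((s,t,p), (s',t',p')) =
       4n [p = p'] \sum_b K(s,b) K(s',b) [i b + t = j b + t'].
   For i = j this is 16n times the identity.  For i <> j the lines
   b |-> i b + t and b |-> j b + t' of the affine plane over GF(4) meet at most
   once, so (4n)^-1 H_i H_j^T has entries in {0, 1, -1}; its weight is 16
   because H_j^T H_j = 16n. *)

Set Implicit Arguments.
Unset Strict Implicit.
Unset Printing Implicit Defensive.
Import Order.TTheory GRing.Theory Num.Theory.
Local Open Scope ring_scope.

Lemma pm1M (R : pzRingType) (a b : R) :
  a = 1 \/ a = -1 -> b = 1 \/ b = -1 -> a * b = 1 \/ a * b = -1.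
Proof. by case=> ->; case=> ->; rewrite ?mulr1 ?mulrN1 ?opprK; auto. Qed.

Lemma pm1_signr (R : pzRingType) k : (-1) ^+ k = 1 :> R \/ (-1) ^+ k = -1 :> R.
Proof. by rewrite -signr_odd; case: odd; auto. Qed.

Lemma sum_skew_pairs (R : numFieldType) (V : lmodType R) (I : finType)
    (T : I -> I -> V) :
  (forall x y, x != y -> T y x = - T x y) ->
  \sum_x \sum_y T x y = \sum_x T x x.
Proof.
move=> Tskew; apply: (@scalerI _ _ 2%:R); first by rewrite pnatr_eq0.
rewrite !scaler_nat !mulr2n {2}exchange_big -!big_split /=.
apply: eq_bigr=> x _; rewrite -big_split /= (bigD1 x) //= big1 ?addr0 // => y yx.
by rewrite (Tskew x y) 1?eq_sym // addrN.
Qed.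

Lemma mulmx_scalarC (F : fieldType) n (A B : 'M[F]_n) (c : F) :
  c != 0 -> A *m B = c%:M -> B *m A = c%:M.
Proof.
move=> c0 AB; have /mulmx1C : A *m (c^-1 *: B) = 1%:M.
  by rewrite -scalemxAr AB scale_scalar_mx mulVf.
rewrite -scalemxAl => /(congr1 ( *:%R c)).
by rewrite scalerA mulfV // scale1r scale_scalar_mx mulr1.
Qed.

Lemma rowsub_mul_tr (R : pzRingType) m m' n (f g : 'I_m' -> 'I_m)
    (A B : 'M[R]_(m, n)) :
  rowsub f A *m (rowsub g B)^T = mxsub f g (A *m B^T).
Proof. by rewrite mxsub_mul trmx_mxsub. Qed.

Lemma eq_mxtens_index m n (a b : 'I_m * 'I_n) :
  (mxtens_index a == mxtens_index b) = (a == b).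
Proof. by rewrite (inj_eq (can_inj (@mxtens_indexK m n))). Qed.

Lemma tensmxNl (R : pzRingType) m n p q (A : 'M[R]_(m, n)) (B : 'M[R]_(p, q)) :
  (- A) *t B = - (A *t B).
Proof. by apply/matrixP=> u v; rewrite !mxE mulNr. Qed.

Lemma tensmx_sumr (R : pzRingType) (I : Type) (r : seq I) (P : pred I) m n p q
    (A : 'M[R]_(m, n)) (B : I -> 'M[R]_(p, q)) :
  A *t (\sum_(i <- r | P i) B i) = \sum_(i <- r | P i) A *t B i.
Proof.
apply/matrixP=> u v; rewrite mxE !summxE mulr_sumr.
by apply: eq_bigr=> i _; rewrite mxE.
Qed.

Lemma tens_scalar_scalar_mx (R : comPzRingType) m p (a b : R) :
  (a%:M : 'M_m) *t (b%:M : 'M_p) = (a * b)%:M.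
Proof.
apply/matrixP=> u v; case: (mxtens_indexP u)=> t s; case: (mxtens_indexP v)=> t' s'.
rewrite tensmxE !mxE eq_mxtens_index xpair_eqE.
by case: (t == t'); case: (s == s'); rewrite ?mulr1n ?mulr0n ?mulr0 ?mul0r.
Qed.

Lemma tens_sum_mul_tr (R : comPzRingType) (I : finType) m n p q
    (A C : I -> 'M[R]_(m, n)) (B D : I -> 'M[R]_(p, q)) :
  (forall i j, i != j -> A i *m (C j)^T = 0) ->
  (\sum_i A i *t B i) *m (\sum_i C i *t D i)^T =
  \sum_i (A i *m (C i)^T) *t (B i *m (D i)^T).
Proof.
move=> AC0; rewrite raddf_sum mulmx_suml; apply: eq_bigr=> i _.
rewrite mulmx_sumr (bigD1 i) //= big1 ?addr0 => [|j ji]; rewrite trmx_tens tensmx_mul //.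
by rewrite AC0 1?eq_sym // tens0mx.
Qed.

Lemma hadamard_weighing (R : rcfType) N (H : 'M[R]_N) : hadamard H -> weighing N H.
Proof. by case=> pmH HH; split=> // i j; case: (pmH i j); auto. Qed.

Lemma hadamard_tens (R : rcfType) m n (A : 'M[R]_m) (B : 'M[R]_n) :
  hadamard A -> hadamard B -> hadamard (A *t B).
Proof.
case=> pmA AA [pmB BB]; split.
  move=> u v; case: (mxtens_indexP u) => i j; case: (mxtens_indexP v) => k l.
  by rewrite tensmxE; apply: pm1M.
by rewrite trmx_tens tensmx_mul AA BB tens_scalar_scalar_mx natrM.
Qed.

Definition sylvester2 {R : pzRingType} : 'M[R]_2 := \matrix_(i, j) (-1) ^+ (i * j).

Lemma hadamard_sylvester2 (R : rcfType) : hadamard (@sylvester2 R).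
Proof.
split=> [i j|]; first by rewrite mxE; apply: pm1_signr.
apply/matrixP=> i j; rewrite !mxE !big_ord_recr big_ord0 /= !mxE.
by move: i j; do 2!case=> [[|[|//]] ?]; rewrite /= ?expr0 ?expr1; ring.
Qed.

(* 'I_4 stands for GF(4) = {0, 1, w, w^2} with w = 2 and w^2 = 3: addition is
   the bitwise xor of the indices, multiplication is read off the table. *)
Definition add4 (a b : 'I_4) : 'I_4 := inZp (Nat.lxor a b).

Definition mul4 (a b : 'I_4) : 'I_4 :=
  inZp (nth 0 (nth [::] [:: [:: 0; 0; 0; 0]; [:: 0; 1; 2; 3];
                            [:: 0; 2; 3; 1]; [:: 0; 3; 1; 2]] a) b)%N.

Lemma add4K (a : 'I_4) : involutive (add4 a).
Proof. by move=> t; move: a t; do 2!case=> [[|[|[|[|//]]]] ?]; apply: val_inj. Qed.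

Definition gf4_line (i b t : 'I_4) : 'I_4 := add4 (mul4 i b) t.

Lemma gf4_line_inj (i b : 'I_4) : injective (gf4_line i b).
Proof. exact: can_inj (add4K _). Qed.

Lemma gf4_lines_meet_once (i j b b' t t' : 'I_4) : i != j ->
  gf4_line i b t = gf4_line j b t' -> gf4_line i b' t = gf4_line j b' t' -> b = b'.
Proof.
move=> ij /eqP e /eqP e'; apply/eqP; move: i j b b' t t' ij e e'.
by do 6!case=> [[|[|[|[|//]]]] ?].
Qed.

Definition williamson_sign (x c : 'I_4) : nat :=
  nth 0 (nth [::] [:: [:: 0; 0; 0; 0]; [:: 1; 0; 1; 0];
                      [:: 1; 0; 0; 1]; [:: 1; 1; 0; 0]] x) c.

(* The sign pattern of the block X in the Williamson array
   [[A, B, C, D], [-B, A, -D, C], [-C, D, A, -B], [-D, -C, B, A]]. *)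
Definition williamson_coef {R : pzRingType} (X : 'I_4) : 'M[R]_4 :=
  \matrix_(x, c) ((-1) ^+ williamson_sign x c *+ (add4 x c == X)).

Lemma williamson_coef_tr (R : comPzRingType) (X : 'I_4) :
  williamson_coef X *m (williamson_coef X)^T = 1%:M :> 'M[R]_4.
Proof.
apply/matrixP=> x y; rewrite !mxE !big_ord_recr big_ord0 /= !mxE.
by move: X x y; do 3!case=> [[|[|[|[|//]]]] ?]; rewrite /= ?expr0 ?expr1; ring.
Qed.

Lemma williamson_coef_skew (R : comPzRingType) (X Y : 'I_4) : X != Y ->
  williamson_coef Y *m (williamson_coef X)^T =
  - (williamson_coef X *m (williamson_coef Y)^T) :> 'M[R]_4.
Proof.
rewrite -(inj_eq val_inj) => XY; apply/matrixP=> x y.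
rewrite !mxE !big_ord_recr !big_ord0 /= !mxE.
by move: X Y x y XY; do 4!case=> [[|[|[|[|//]]]] ?]; rewrite /= ?expr0 ?expr1 // => _; ring.
Qed.

Section WilliamsonArray.
Variables (R : numFieldType) (n : nat) (A B C D : 'M[R]_n).

Definition williamson_block (X : 'I_4) : 'M[R]_n := tnth [tuple A; B; C; D] X.

Definition williamson_array : 'M[R]_(4 * n) :=
  \sum_X williamson_coef X *t williamson_block X.

Lemma williamson_arrayE x c p q :
  williamson_array (mxtens_index (x, p)) (mxtens_index (c, q)) =
  (-1) ^+ williamson_sign x c * williamson_block (add4 x c) p q.
Proof.
rewrite summxE (bigD1 (add4 x c)) //= big1 ?addr0 => [|X cX].
  by rewrite tensmxE mxE eqxx.
by rewrite tensmxE mxE eq_sym (negPf cX) mul0r.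
Qed.

Lemma williamson_array_gram (c : R) :
  (forall X Y, williamson_block X *m (williamson_block Y)^T =
               williamson_block Y *m (williamson_block X)^T) ->
  \sum_X williamson_block X *m (williamson_block X)^T = c%:M ->
  williamson_array *m williamson_array^T = (1%:M : 'M_4) *t c%:M.
Proof.
move=> amicable sumc.
transitivity (\sum_X \sum_Y (williamson_coef X *m (williamson_coef Y)^T) *t
                (williamson_block X *m (williamson_block Y)^T)).
  rewrite raddf_sum mulmx_suml; apply: eq_bigr => X _.
  by rewrite mulmx_sumr; apply: eq_bigr => Y _ /=; rewrite trmx_tens tensmx_mul.
rewrite sum_skew_pairs => [|X Y XY]; last first.
  by rewrite williamson_coef_skew // amicable tensmxNl.
by under eq_bigr do rewrite williamson_coef_tr; rewrite -tensmx_sumr sumc.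
Qed.

End WilliamsonArray.

Lemma hadamard_williamson_array (R : rcfType) n (A B C D : 'M[R]_n) :
  williamson_type A B C D -> hadamard (williamson_array A B C D).
Proof.
case=> -[pmA pmB pmC pmD] amicable sumABCD; split.
  move=> u v; case: (mxtens_indexP u) => x p; case: (mxtens_indexP v) => c q.
  rewrite williamson_arrayE; apply: pm1M; first exact: pm1_signr.
  by case: (add4 x c) => [[|[|[|[|//]]]] ?].
rewrite (@williamson_array_gram _ _ _ _ _ _ (4 * n)%:R).
- by rewrite tens_scalar_scalar_mx mul1r.
- by move=> X Y; apply: amicable; apply: mem_tnth.
- by rewrite !big_ord_recl big_ord0 addr0 /= -sumABCD !addrA.
Qed.

Definition block_shift k m (f : 'I_k -> 'I_k) (x : 'I_(k * m)) : 'I_(k * m) :=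
  mxtens_index (f (mxtens_unindex x).1, (mxtens_unindex x).2).

Lemma block_shiftE k m (f : 'I_k -> 'I_k) t p :
  block_shift f (mxtens_index (t, p)) = mxtens_index (f t, p) :> 'I_(k * m).
Proof. by rewrite /block_shift mxtens_indexK. Qed.

Definition col_mask {R : pzRingType} m n (b : 'I_n) (A : 'M[R]_(m, n)) :
  'M[R]_(m, n) := \matrix_(s, c) (A s c *+ (c == b)).

Lemma col_mask_mul_tr_eq0 (R : pzRingType) m n (b b' : 'I_n)
    (A B : 'M[R]_(m, n)) :
  b != b' -> col_mask b A *m (col_mask b' B)^T = 0.
Proof.
move=> bb'; apply/matrixP=> s s'; rewrite !mxE big1 // => c _; rewrite !mxE.
by have [->|] := eqVneq c b; rewrite ?mulr0n ?mul0r // (negPf bb') mulr0n mulr0.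
Qed.

Lemma col_mask_mul_trE (R : pzRingType) m n (b : 'I_n) (A B : 'M[R]_(m, n)) s s' :
  (col_mask b A *m (col_mask b B)^T) s s' = A s b * B s' b.
Proof.
rewrite !mxE (bigD1 b) //= big1 ?addr0 => [|c cb]; rewrite !mxE ?eqxx //.
by rewrite (negPf cb) !mulr0n mulr0.
Qed.

Section QuasiUnbiasedFamily.
Variables (R : rcfType) (k m : nat) (I : eqType) (sigma : I -> 'I_k -> 'I_k -> 'I_k).
Hypothesis sigma_inj : forall i b, injective (sigma i b).
Hypothesis sigma_meet_once : forall i j b b' t t', i != j ->
  sigma i b t = sigma j b t' -> sigma i b' t = sigma j b' t' -> b = b'.
Variables (K : 'M[R]_k) (W : 'M[R]_(k * m)).
Hypotheses (hadK : hadamard K) (hadW : hadamard W).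
Hypotheses (k_gt0 : (0 < k)%N) (m_gt0 : (0 < m)%N).

Definition qu_family (i : I) : 'M[R]_(k * (k * m)) :=
  \sum_b col_mask b K *t rowsub (block_shift (sigma i b)) W.

Lemma qu_familyE i s t p b y :
  qu_family i (mxtens_index (s, mxtens_index (t, p))) (mxtens_index (b, y)) =
  K s b * W (mxtens_index (sigma i b t, p)) y.
Proof.
rewrite summxE (bigD1 b) //= big1 ?addr0 => [|c cb]; rewrite tensmxE !mxE.
  by rewrite eqxx block_shiftE.
by rewrite eq_sym in cb; rewrite (negPf cb) mulr0n mul0r.
Qed.

Lemma qu_family_gramE i j s t p s' t' p' :
  (qu_family i *m (qu_family j)^T) (mxtens_index (s, mxtens_index (t, p)))
     (mxtens_index (s', mxtens_index (t', p'))) =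
  (k * m)%:R * (\sum_b K s b * K s' b *+ (sigma i b t == sigma j b t')) *+ (p == p').
Proof.
rewrite tens_sum_mul_tr => [|b b']; last exact: col_mask_mul_tr_eq0.
rewrite summxE mulr_sumr -sumrMnl; apply: eq_bigr => b _.
rewrite tensmxE col_mask_mul_trE rowsub_mul_tr (proj2 hadW) !mxE !block_shiftE.
rewrite eq_mxtens_index xpair_eqE.
by case: (_ == _); case: (_ == _); rewrite /= ?mulr0n ?mulr1n ?mulr0 // mulrC.
Qed.

Lemma qu_family_gram_diag i :
  qu_family i *m (qu_family i)^T = (k * (k * m))%:R%:M.
Proof.
apply/matrixP=> u v.
case: (mxtens_indexP u) => s x; case: (mxtens_indexP x) => t p.
case: (mxtens_indexP v) => s' x'; case: (mxtens_indexP x') => t' p'.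
rewrite qu_family_gramE mxE !(eq_mxtens_index, xpair_eqE).
under eq_bigr => b _ do rewrite (inj_eq (@sigma_inj i b)).
have KK : \sum_b K s b * K s' b = k%:R *+ (s == s').
  have := congr1 (fun M : 'M[R]_k => M s s') (proj2 hadK); rewrite !mxE => <-.
  by apply: eq_bigr => b _; rewrite mxE.
rewrite sumrMnl KK.
by case: (s == s'); case: (t == t'); case: (p == p');
  rewrite ?mulr0n ?mulr1n ?mulr0 // -natrM mulnC.
Qed.

Lemma hadamard_qu_family i : hadamard (qu_family i).
Proof.
split; last exact: qu_family_gram_diag.
move=> u v; case: (mxtens_indexP u) => s x; case: (mxtens_indexP x) => t p.
case: (mxtens_indexP v) => b y.
by rewrite qu_familyE; apply: pm1M; [exact: (proj1 hadK) | exact: (proj1 hadW)].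
Qed.

Lemma qu_family_gram_offdiag i j u v : i != j ->
  let e := (k * m)%:R^-1 * (qu_family i *m (qu_family j)^T) u v in
  e = 0 \/ e = 1 \/ e = -1.
Proof.
move=> ij /=.
case: (mxtens_indexP u) => s x; case: (mxtens_indexP x) => t p.
case: (mxtens_indexP v) => s' x'; case: (mxtens_indexP x') => t' p'.
have km0 : (k * m)%:R != 0 :> R by rewrite pnatr_eq0 -lt0n muln_gt0 k_gt0.
rewrite qu_family_gramE -mulrnAr mulrA mulVf // mul1r.
case: (p == p'); last by left.
case: (pickP (fun b => sigma i b t == sigma j b t')) => [b0 meet0 | nomeet].
  rewrite (bigD1 b0) //= meet0 big1 ?addr0 => [|b bb0].
    by right; apply: pm1M; exact: (proj1 hadK).
  case: eqP => // meet; case/eqP: bb0.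
  exact: sigma_meet_once ij meet (eqP meet0).
by left; rewrite big1 // => b _; rewrite nomeet.
Qed.

Lemma quasi_unbiased_qu_family i j : i != j ->
  quasi_unbiased (k * (k * m)) (k ^ 2) ((k * m) ^ 2) (qu_family i) (qu_family j).
Proof.
move=> ij; have weighH l : weighing (k * (k * m)) (qu_family l).
  exact/hadamard_weighing/hadamard_qu_family.
split; [exact: weighH | exact: weighH |].
rewrite natrX sqrtr_sqr normr_nat; split=> [u v|].
  by rewrite mxE; apply: qu_family_gram_offdiag.
have HjH : (qu_family j)^T *m qu_family j = (k * (k * m))%:R%:M.
  apply: mulmx_scalarC (qu_family_gram_diag j).
  by rewrite pnatr_eq0 -lt0n !muln_gt0 k_gt0 m_gt0.
rewrite linearZ /= -scalemxAl -scalemxAr scalerA trmx_mul trmxK mulmxA.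
rewrite -(mulmxA (qu_family i)) HjH mul_mx_scalar -scalemxAl qu_family_gram_diag.
rewrite !scale_scalar_mx; congr (_%:M).
rewrite natrX [(k * (k * m))%:R]natrM; field.
by rewrite !pnatr_eq0 -!lt0n k_gt0 m_gt0.
Qed.

End QuasiUnbiasedFamily.

Theorem proposition4p11 (R : rcfType) (n : nat) (hn : (0 < n)%N) :
  (exists A B C D : 'M[R]_n, williamson_type A B C D) ->
  exists H : 'I_4 -> 'M[R]_(16 * n),
    (forall i, hadamard (H i)) /\
    (forall i j, i != j ->
       quasi_unbiased (16 * n) 16 (16 * n ^ 2) (H i) (H j)).
Proof.
case=> A [B] [C] [D] /hadamard_williamson_array hadW.
have hadK : hadamard (sylvester2 *t sylvester2 : 'M[R]_4).
  exact: hadamard_tens (hadamard_sylvester2 R) (hadamard_sylvester2 R).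
rewrite -[(16 * n)%N]/(4 * 4 * n)%N -mulnA -[16%N]/(4 ^ 2)%N -expnMn.
exists (qu_family gf4_line (sylvester2 *t sylvester2) (williamson_array A B C D)).
split=> [i|i j ij].
  by apply: hadamard_qu_family => //; exact: gf4_line_inj.
by apply: quasi_unbiased_qu_family => //;
  [exact: gf4_line_inj | exact: gf4_lines_meet_once].
Qed.
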